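(* Let $\mathbf{A}=(\mathcal{P},\mathcal{L},\parallel)$ and $\mathbf{A}'=(\mathcal{P}',\mathcal{L}',\parallel')$ be affine spaces with $\dim\mathbf{A}'\ge 3$. Suppose that $\varphi:\mathcal{L}\to\mathcal{L}'$ is an isomorphism of the Plücker space $(\mathcal{L},\sim)$ onto the Plücker space $(\mathcal{L}',\sim')$, i.e. a bijection such that for all $a,b\in\mathcal{L}$: $a\sim b \iff a^\varphi\sim' b^\varphi$. Then the mapping $$\kappa:\mathcal{P}\to\mathcal{P}',\qquad a\cap b\mapsto a^\varphi\cap b^\varphi\quad(a,b\in\mathcal{L},\ a\approx b)$$ is well defined (i.e. for adjacent lines $a,b$ the lines $a^\varphi,b^\varphi$ meet in exactly one point, and this point depends only on the point $a\cap b$, not on the choice of the adjacent lines $a,b$ through it), and $\kappa$ is a collineation.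
   Context: An affine space $\mathbf{A}=(\mathcal{P},\mathcal{L},\parallel)$ has point set $\mathcal{P}$, line set $\mathcal{L}$ (lines viewed as subsets of $\mathcal{P}$) and parallelism $\parallel$. Two lines $a,b\in\mathcal{L}$ are called related, written $a\sim b$, if $a\cap b\neq\emptyset$ (so every line is related to itself); they are adjacent, written $a\approx b$, if $a\sim b$ and $a\neq b$. The pair $(\mathcal{L},\sim)$ is called the affine Plücker space on $\mathbf{A}$; similarly $\sim'$, $\approx'$ for $\mathbf{A}'$. The image of $x$ under a map $\varphi$ is written $x^\varphi$. A collineation $\mathcal{P}\to\mathcal{P}'$ is a bijection that maps collinear triples of points to collinear triples and non-collinear triples to non-collinear triples. *)

Set Implicit Arguments.

(** An affine space (P, L, ||) in the sense of Lenz / Karzel–Kroll: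
    lines are determined by their point sets ("lines viewed as subsets of P"). *)
Record affine_space := AffineSpace {
  point : Type;
  line : Type;
  on : point -> line -> Prop;
  par : line -> line -> Prop;
  line_ext : forall l m : line, (forall p, on p l <-> on p m) -> l = m;
  join_ax : forall p q : point, p <> q -> exists l, on p l /\ on q l /\
              forall m, on p m -> on q m -> m = l;
  two_points : forall l : line, exists p q, p <> q /\ on p l /\ on q l;
  par_refl : forall l, par l l;
  par_sym : forall l m, par l m -> par m l;
  par_trans : forall l m n, par l m -> par m n -> par l n;
  euclid : forall (p : point) (l : line), exists m, par m l /\ on p m /\
              forall m', par m' l -> on p m' -> m' = m;
  triangle : forall (a b c a' b' : point) (lab lac lbc l' m n : line),
      (~ exists l, on a l /\ on b l /\ on c l) ->
      on a lab -> on b lab -> on a lac -> on c lac -> on b lbc -> on c lbc ->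
      a' <> b' -> on a' l' -> on b' l' -> par lab l' ->
      on a' m -> par m lac -> on b' n -> par n lbc ->
      exists c', on c' m /\ on c' n
}.

Arguments on {a} p l : rename.
Arguments par {a} l m : rename.

Section Notions.
Context {A : affine_space}.

Definition related (a b : line A) : Prop := exists p, on p a /\ on p b.
Definition adjacent (a b : line A) : Prop := related a b /\ a <> b.

Definition collinear (x y z : point A) : Prop :=
  exists l, on x l /\ on y l /\ on z l.

Definition subspace (T : point A -> Prop) : Prop :=
  (forall x y l, x <> y -> T x -> T y -> on x l -> on y l ->
     forall z, on z l -> T z) /\
  (forall l m x, (forall z, on z l -> T z) -> T x -> on x m -> par m l ->
     forall z, on z m -> T z).

Definition span (S : point A -> Prop) (x : point A) : Prop :=
  forall T, subspace T -> (forall y, S y -> T y) -> T x.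

(* dim A >= 3: A contains a plane (span of three non-collinear points)
   that is not the whole point set *)
Definition dim_ge3 : Prop :=
  exists a b c d, ~ collinear a b c /\
    ~ span (fun x => x = a \/ x = b \/ x = c) d.

End Notions.

Definition bijective_map (X Y : Type) (f : X -> Y) : Prop :=
  exists g : Y -> X, (forall x, g (f x) = x) /\ (forall y, f (g y) = y).

Definition plucker_iso {A A' : affine_space} (phi : line A -> line A') : Prop :=
  bijective_map phi /\
  forall a b, related a b <-> related (phi a) (phi b).

Definition collineation {A A' : affine_space} (k : point A -> point A') : Prop :=
  bijective_map k /\
  forall x y z, (collinear x y z -> collinear (k x) (k y) (k z)) /\
                (~ collinear x y z -> ~ collinear (k x) (k y) (k z)).

From Stdlib Require Import Classical ClassicalEpsilon.

(* The key fact is that phi maps pencils into pencils: if a, b, c pass through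
   a point p, their images pairwise meet (phi preserves ~), and if they were
   not concurrent they would form a triangle in A' such that every line of A'
   meets a line meeting all three sides (the image of a suitable line through
   p).  Such a triangle generates the whole point set of A', which contradicts
   dim A' >= 3.  Hence all lines through p are mapped to lines through one
   point kappa(p), and kappa is a collineation by elementary incidence. *)

Section Incidence.
Context {X : affine_space}.
Implicit Types (p q x y z : point X) (l m k : line X).

Lemma line_unique p q l m :
  p <> q -> on p l -> on q l -> on p m -> on q m -> l = m.
Proof.
  intros Hpq Hpl Hql Hpm Hqm.
  destruct (join_ax X Hpq) as [j [_ [_ Hj]]].
  now rewrite (Hj l Hpl Hql), (Hj m Hpm Hqm).
Qed.

Lemma meet_unique l m p q :
  l <> m -> on p l -> on p m -> on q l -> on q m -> p = q.
Proof.
  intros Hlm Hpl Hpm Hql Hqm. apply NNPP. intro Hpq.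
  exact (Hlm (line_unique p q l m Hpq Hpl Hql Hpm Hqm)).
Qed.

Lemma join {p q} : p <> q -> exists l, on p l /\ on q l.
Proof. intro Hpq. destruct (join_ax X Hpq) as [l [Hp [Hq _]]]. eauto. Qed.

Lemma parallel_unique p {l m1 m2} :
  par m1 l -> par m2 l -> on p m1 -> on p m2 -> m1 = m2.
Proof.
  intros H1 H2 H3 H4. destruct (euclid X p l) as [m [_ [_ Hm]]].
  now rewrite (Hm m1 H1 H3), (Hm m2 H2 H4).
Qed.

Lemma parallel_meeting_eq p {m1 m2} : par m1 m2 -> on p m1 -> on p m2 -> m1 = m2.
Proof. intros H H1 H2. exact (parallel_unique p H (par_refl X m2) H1 H2). Qed.

Lemma par_common {l m1 m2} : par m1 l -> par m2 l -> par m1 m2.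
Proof. intros H1 H2. exact (par_trans X _ _ _ H1 (par_sym X _ _ H2)). Qed.

Lemma other_point l p : exists q, on q l /\ q <> p.
Proof.
  destruct (two_points X l) as [s [t [Hst [Hs Ht]]]].
  destruct (classic (s = p)) as [->|Hsp]; eauto.
Qed.

(* Noncollinear points are distinct, provided some line l0 exists (so that
   every point lies on a line, namely its parallel to l0). *)
Lemma noncollinear_distinct (l0 : line X) x y z :
  ~ collinear x y z -> x <> y /\ x <> z /\ y <> z.
Proof.
  intro Hn.
  assert (Hpair : forall p q, exists l, on p l /\ on q l).
  { intros p q. destruct (classic (p = q)) as [<-|Hpq]; [|exact (join Hpq)].
    destruct (euclid X p l0) as [l [_ [Hp _]]]. eauto. }
  repeat split; intros <-; apply Hn.
  - destruct (Hpair x z) as [l [H1 H2]]. exists l; auto.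
  - destruct (Hpair x y) as [l [H1 H2]]. exists l; auto.
  - destruct (Hpair x y) as [l [H1 H2]]. exists l; auto.
Qed.

Lemma line_through_meeting p (d : line X) : exists e, on p e /\ related e d.
Proof.
  destruct (classic (on p d)) as [H|H].
  - exists d. split; [assumption|exists p; auto].
  - destruct (two_points X d) as [s [_ [_ [Hs _]]]].
    assert (Hps : p <> s) by (intros ->; contradiction).
    destruct (join Hps) as [e [H1 H2]]. exists e. split; [|exists s]; auto.
Qed.

Lemma adjacent_lines_through (l1 l2 : line X) :
  l1 <> l2 -> forall p, exists a b, adjacent a b /\ on p a /\ on p b.
Proof.
  intros N12 p.
  assert (Hm : exists m, ~ on p m).
  { destruct (classic (on p l1)) as [H1|H1]; [|eauto].
    destruct (classic (on p l2)) as [H2|H2]; [|eauto].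
    destruct (other_point l1 p) as [q [Hq Hqp]].
    destruct (euclid X q l2) as [m [Hm [Hqm _]]].
    exists m. intro Hpm. rewrite (parallel_meeting_eq p Hm Hpm H2) in Hqm.
    exact (N12 (line_unique q p l1 l2 Hqp Hq H1 Hqm H2)). }
  destruct Hm as [m Hpm].
  destruct (two_points X m) as [s [t [Hst [Hs Ht]]]].
  assert (Hps : p <> s) by (intros ->; contradiction).
  assert (Hpt : p <> t) by (intros ->; contradiction).
  destruct (join Hps) as [a [Ha1 Ha2]].
  destruct (join Hpt) as [b [Hb1 Hb2]].
  exists a, b. repeat split; auto.
  - exists p; auto.
  - intros <-. apply Hpm. now rewrite <- (line_unique s t a m Hst Ha2 Hb2 Hs Ht).
Qed.

(* A line through a point of the side ac of a triangle abc, parallel to the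
   side ab, meets the side bc (Tamaschke's axiom with one degenerate vertex). *)
Lemma parallel_meets_side a b c a' lab lac lbc l' :
  ~ collinear a b c -> on a lab -> on b lab -> on a lac -> on c lac ->
  on b lbc -> on c lbc -> on a' lac -> on a' l' -> par l' lab -> related l' lbc.
Proof.
  intros Hn Ha1 Hb1 Ha2 Hc2 Hb3 Hc3 Ha' Hl' Hp.
  destruct (classic (a' = c)) as [->|Ne].
  - exists c. auto.
  - destruct (@triangle X a c b a' c lac lab lbc lac l' lbc) as [s [H1 H2]];
      auto using par_refl.
    + intros [l [H1 [H2 H3]]]. apply Hn. exists l; auto.
    + exists s; auto.
Qed.

Lemma parallelogram_closes o u v lou lov m n :
  ~ collinear o u v -> on o lou -> on u lou -> on o lov -> on v lov ->
  on v m -> par m lou -> on u n -> par n lov -> related m n.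
Proof.
  intros Hn H1 H2 H3 H4 H5 H6 H7 H8.
  assert (Huv : u <> v) by (intros <-; apply Hn; exists lou; auto).
  destruct (join Huv) as [luv [Hu Hv]].
  destruct (@triangle X u v o v u luv lou lov luv m n) as [s [S1 S2]];
    auto using par_refl.
  - intros [l [A1 [A2 A3]]]. apply Hn. exists l; auto.
  - exists s; auto.
Qed.

End Incidence.

Section Planes.
Context {X : affine_space}.
Implicit Types (x y z q w : point X) (l m k g pq pz : line X).

Lemma parallel_meets_transversal_at l (p1 p2 : line X) k k' pq x y y' q :
  par p1 l -> par p2 l -> p1 <> p2 ->
  on x p1 -> on y p2 -> on y' p2 -> on x k -> on y k -> on x k' -> on y' k' ->
  on q k -> on q pq -> par pq l -> related pq k'.
Proof.
  intros Hp1 Hp2 N12 Hx Hy Hy' Hxk Hyk Hxk' Hy'k' Hqk Hqpq Hpq.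
  assert (Hxp2 : ~ on x p2) by (intro H; exact (N12 (parallel_unique x Hp1 Hp2 Hx H))).
  assert (Hxy : x <> y) by (intros ->; contradiction).
  destruct (classic (y = y')) as [<-|Nyy'].
  - rewrite <- (line_unique x y k k' Hxy Hxk Hyk Hxk' Hy'k'). exists q; auto.
  - apply (parallel_meets_side y y' x q p2 k k' pq); auto.
    + intros [n [N1 [N2 N3]]]. apply Hxp2.
      now rewrite <- (line_unique y y' n p2 Nyy' N1 N2 Hy Hy').
    + exact (par_common Hpq Hp2).
Qed.

(* The same for any two transversals k, k' of the distinct parallels p1, p2:
   pass through the auxiliary transversal joining the point of k on p1 to the
   point of k' on p2. *)
Lemma parallel_meets_transversal l (p1 p2 : line X) k k' pq (x1 x2 v1 v2 : point X) q :
  par p1 l -> par p2 l -> p1 <> p2 ->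
  on x1 p1 -> on x2 p2 -> on x1 k -> on x2 k ->
  on v1 p1 -> on v2 p2 -> on v1 k' -> on v2 k' ->
  on q k -> on q pq -> par pq l -> related pq k'.
Proof.
  intros Hp1 Hp2 N12 Hx1 Hx2 Hx1k Hx2k Hv1 Hv2 Hv1k' Hv2k' Hqk Hqpq Hpq.
  assert (Hx1v2 : x1 <> v2).
  { intros <-. exact (N12 (parallel_unique x1 Hp1 Hp2 Hx1 Hv2)). }
  destruct (join Hx1v2) as [k'' [Hx1k'' Hv2k'']].
  destruct (parallel_meets_transversal_at l p1 p2 k k'' pq x1 x2 v2 q)
    as [s [Hspq Hsk'']]; auto.
  exact (parallel_meets_transversal_at l p2 p1 k'' k' pq v2 x1 v1 s
           Hp2 Hp1 (not_eq_sym N12) Hv2 Hx1 Hv1 Hv2k'' Hx1k'' Hv2k' Hv1k'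
           Hsk'' Hspq Hpq).
Qed.

(* The points whose parallel to l meets g; when l and g meet, this is the
   plane they span. *)
Definition plane_of l g w : Prop :=
  exists k, on w k /\ par k l /\ related k g.

Lemma plane_of_line_closed l g k (x1 x2 : point X) z :
  x1 <> x2 -> plane_of l g x1 -> plane_of l g x2 ->
  on x1 k -> on x2 k -> on z k -> plane_of l g z.
Proof.
  intros N12 [p1 [Hx1 [Hp1 [v1 [Hv1p Hv1g]]]]] [p2 [Hx2 [Hp2 [v2 [Hv2p Hv2g]]]]]
    Hx1k Hx2k Hzk.
  destruct (classic (p1 = p2)) as [<-|Npp].
  - rewrite (line_unique x1 x2 k p1 N12 Hx1k Hx2k Hx1 Hx2) in Hzk.
    exists p1. split; [|split; [|exists v1]]; auto.
  - destruct (euclid X z l) as [pz [Hpz [Hzpz _]]].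
    exists pz. split; [|split]; auto.
    exact (parallel_meets_transversal l p1 p2 k g pz x1 x2 v1 v2 z
             Hp1 Hp2 Npp Hx1 Hx2 Hx1k Hx2k Hv1p Hv2p Hv1g Hv2g Hzk Hzpz Hpz).
Qed.

Lemma plane_of_parallel_closed l g k m q :
  (forall z, on z k -> plane_of l g z) -> plane_of l g q -> on q m -> par m k ->
  forall z, on z m -> plane_of l g z.
Proof.
  intros Hk Hq Hqm Hmk z Hzm.
  destruct (classic (on q k)) as [Hqk|Hqk].
  { rewrite (parallel_meeting_eq q Hmk Hqm Hqk) in Hzm. exact (Hk z Hzm). }
  destruct Hq as [pq [Hqpq [Hpq [vq [Hvq Hvqg]]]]].
  destruct (two_points X k) as [y1 [y2 [Hy12 [Hy1 Hy2]]]].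
  destruct (Hk y1 Hy1) as [p1 [Hx1 [Hp1 [v1 [Hv1p Hv1g]]]]].
  destruct (Hk y2 Hy2) as [p2 [Hx2 [Hp2 [v2 [Hv2p Hv2g]]]]].
  destruct (classic (p1 = p2)) as [<-|Npp].
  { (* k is itself parallel to l, hence m is the parallel pq to l through q *)
    rewrite (line_unique y1 y2 k p1 Hy12 Hy1 Hy2 Hx1 Hx2) in Hmk.
    rewrite (parallel_unique q (par_trans X _ _ _ Hmk Hp1) Hpq Hqm Hqpq) in Hzm.
    exists pq. split; [|split; [|exists vq]]; auto. }
  destruct (parallel_meets_transversal l p1 p2 g k pq v1 v2 y1 y2 vq)
    as [y [Hypq Hyk]]; auto.
  assert (Hqy : q <> y) by (intros ->; contradiction).
  destruct (other_point k y) as [y' [Hy'k Hy'y]].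
  destruct (Hk y' Hy'k) as [p' [Hy'p' [Hp' Hp'g]]].
  (* the parallelogram on y, y', q yields a second point s of m in the plane *)
  destruct (parallelogram_closes y y' q k pq m p') as [s [Hsm Hsp']]; auto.
  - intros [n [N1 [N2 N3]]]. apply Hqk.
    now rewrite <- (line_unique y y' n k (not_eq_sym Hy'y) N1 N2 Hyk Hy'k).
  - exact (par_common Hp' Hpq).
  - assert (Hsq : s <> q).
    { intros ->. rewrite (parallel_unique q Hp' Hpq Hsp' Hqpq) in Hy'p'.
      apply Hqk. rewrite <- (line_unique y y' pq k (not_eq_sym Hy'y) Hypq Hy'p' Hyk Hy'k).
      exact Hqpq. }
    apply (plane_of_line_closed l g m q s z); auto.
    + exists pq. split; [|split; [|exists vq]]; auto.
    + exists p'. auto.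
Qed.

Lemma plane_of_subspace l g : subspace (plane_of l g).
Proof.
  split.
  - intros x y k Hxy Hx Hy Hxk Hyk z Hz. exact (plane_of_line_closed l g k x y z Hxy Hx Hy Hxk Hyk Hz).
  - intros k m x Hk Hx Hxm Hmk. exact (plane_of_parallel_closed l g k m x Hk Hx Hxm Hmk).
Qed.

End Planes.

Section Generation.
Context {X : affine_space}.
Implicit Types (a b c r t u v w x y z : point X).

Definition generates a b c : Prop :=
  forall T, subspace T -> T a -> T b -> T c -> forall w, T w.

Lemma generates_swap12 a b c : generates a b c -> generates b a c.
Proof. intros H T HT Ta Tb Tc. now apply (H T HT). Qed.

Lemma generates_swap23 a b c : generates a b c -> generates a c b.
Proof. intros H T HT Ta Tb Tc. now apply (H T HT). Qed.

Lemma subspace_line (T : point X -> Prop) x y (k : line X) :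
  subspace T -> x <> y -> T x -> T y -> on x k -> on y k -> forall z, on z k -> T z.
Proof. intros [HJ _]. eauto. Qed.

(* Exchange: a point w off the line uv may replace the third vertex r.
   Indeed w lies in the plane spanned by uv and ur, so r lies in every
   subspace through u, v, w. *)
Lemma generates_replace u v r w :
  u <> v -> u <> r -> generates u v r -> ~ collinear u v w -> generates u v w.
Proof.
  intros Huv Hur Hgen Hw.
  destruct (join Huv) as [l [Hul Hvl]].
  destruct (join Hur) as [g [Hug Hrg]].
  assert (Hin : plane_of l g w).
  { apply (Hgen (plane_of l g) (plane_of_subspace l g)).
    - exists l. split; [|split; [apply par_refl|exists u]]; auto.
    - exists l. split; [|split; [apply par_refl|exists u]]; auto.
    - destruct (euclid X r l) as [lr [Hlr [Hrlr _]]].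
      exists lr. split; [|split; [|exists r]]; auto. }
  destruct Hin as [lw [Hwlw [Hlw [s [Hslw Hsg]]]]].
  intros T HT Tu Tv Tw.
  assert (Tl : forall z, on z l -> T z) by exact (subspace_line T u v l HT Huv Tu Tv Hul Hvl).
  assert (Tlw : forall z, on z lw -> T z) by exact (proj2 HT l lw w Tl Tw Hwlw Hlw).
  assert (Hsu : s <> u).
  { intros ->. rewrite (parallel_meeting_eq u Hlw Hslw Hul) in Hwlw.
    apply Hw. exists l; auto. }
  apply (Hgen T HT Tu Tv).
  exact (subspace_line T s u g HT Hsu (Tlw s Hslw) Tu Hsg Hug r Hrg).
Qed.

Lemma generates_slide u v r w (l : line X) :
  generates u v r -> on u l -> on v l -> on w l -> w <> u -> generates u w r.
Proof.
  intros Hgen Hu Hv Hw Hwu T HT Tu Tw Tr.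
  apply (Hgen T HT Tu); auto.
  exact (subspace_line T u w l HT (not_eq_sym Hwu) Tu Tw Hu Hw v Hv).
Qed.

Lemma generates_pivot a v r w :
  generates a v r -> ~ collinear a v r -> w <> a ->
  exists t, generates a w t /\ ~ collinear a w t.
Proof.
  intros Hgen Hn Hwa.
  destruct (join Hwa) as [l0 _].
  destruct (noncollinear_distinct l0 a v r Hn) as [Hav [Har _]].
  destruct (classic (collinear a v w)) as [[n [Ha [Hv Hw]]]|Hc].
  - exists r. split; [exact (generates_slide a v r w n Hgen Ha Hv Hw Hwa)|].
    intros [m [M1 [M2 M3]]]. apply Hn. exists n. repeat split; auto.
    now rewrite <- (line_unique a w m n (not_eq_sym Hwa) M1 M2 Ha Hw).
  - exists v. split.
    + exact (generates_swap23 a v w (generates_replace a v r w Hav Har Hgen Hc)).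
    + intros [m [M1 [M2 M3]]]. apply Hc. exists m; auto.
Qed.

(* In a space of dimension at least 3 no triangle generates the point set:
   by exchange it would generate together with the triangle abc of dim_ge3. *)
Lemma no_generating_triangle x y z :
  @dim_ge3 X -> ~ collinear x y z -> ~ generates x y z.
Proof.
  intros [a [b [c [d [Hnc Hns]]]]] Hxyz Hgen.
  assert (Had : a <> d).
  { intros <-. apply Hns. intros T _ HS. apply HS; auto. }
  destruct (join Had) as [l0 _].
  destruct (noncollinear_distinct l0 a b c Hnc) as [Hab [Hac _]].
  assert (Ha : exists v r, generates a v r /\ ~ collinear a v r).
  { destruct (classic (a = x)) as [<-|Hax]; [eauto|].
    destruct (generates_pivot x y z a Hgen Hxyz Hax) as [t [Hg Hn]].
    exists x, t. split; [exact (generates_swap12 x a t Hg)|].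
    intros [m [M1 [M2 M3]]]. apply Hn. exists m; auto. }
  destruct Ha as [v [r [Hg1 Hn1]]].
  destruct (generates_pivot a v r b Hg1 Hn1 (not_eq_sym Hab)) as [t [Hg2 Hn2]].
  destruct (noncollinear_distinct l0 a b t Hn2) as [_ [Hat _]].
  pose proof (generates_replace a b t c Hab Hat Hg2 Hnc) as Hg3.
  apply Hns. intros T HT HS. apply (Hg3 T HT); apply HS; auto.
Qed.

Lemma triangle_generates (a b c : line X) :
  related a b -> related a c -> related b c ->
  ~ (exists p, on p a /\ on p b /\ on p c) ->
  (forall d, exists e, related e a /\ related e b /\ related e c /\ related e d) ->
  exists x y z, ~ collinear x y z /\ generates x y z.
Proof.
  intros [z [Za Zb]] [y [Ya Yc]] [x [Xb Xc]] Hnc He.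
  assert (Hyz : y <> z) by (intros ->; apply Hnc; eauto).
  assert (Hxy : x <> y) by (intros ->; apply Hnc; eauto).
  assert (Hxz : x <> z) by (intros ->; apply Hnc; eauto).
  exists x, y, z. split.
  - intros [n [N1 [N2 N3]]].
    rewrite (line_unique y z n a Hyz N2 N3 Ya Za) in N1.
    apply Hnc. exists x; auto.
  - intros T HT Tx Ty Tz q.
    pose proof (subspace_line T y z a HT Hyz Ty Tz Ya Za) as Ta.
    pose proof (subspace_line T x z b HT Hxz Tx Tz Xb Zb) as Tb.
    pose proof (subspace_line T x y c HT Hxy Tx Ty Xc Yc) as Tc.
    destruct (euclid X q a) as [m [Hma [Hqm _]]].
    destruct (He m) as [e [[s1 [S1e S1a]] [[s2 [S2e S2b]] [[s3 [S3e S3c]] [s [Se Sm]]]]]].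
    (* e meets the triangle in two distinct points, so it lies in T *)
    assert (Te : forall w, on w e -> T w).
    { destruct (classic (s1 = s2)) as [<-|N12].
      - destruct (classic (s1 = s3)) as [<-|N13]; [exfalso; apply Hnc; eauto|].
        exact (subspace_line T s1 s3 e HT N13 (Ta s1 S1a) (Tc s3 S3c) S1e S3e).
      - exact (subspace_line T s1 s2 e HT N12 (Ta s1 S1a) (Tb s2 S2b) S1e S2e). }
    exact (proj2 HT a m s Ta (Te s Se) Sm Hma q Hqm).
Qed.

Lemma dim_ge3_two_lines : @dim_ge3 X -> exists l1 l2 : line X, l1 <> l2.
Proof.
  intros [a [b [c [d [Hnc Hns]]]]].
  assert (Had : a <> d).
  { intros <-. apply Hns. intros T _ HS. apply HS; auto. }
  destruct (join Had) as [l0 [Hal0 _]].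
  assert (Hx : exists x, ~ on x l0 /\ (x = b \/ x = c)).
  { destruct (classic (on b l0)); [|eauto].
    destruct (classic (on c l0)); [|eauto].
    exfalso. apply Hnc. exists l0; auto. }
  destruct Hx as [x [Hxl0 _]].
  assert (Hax : a <> x) by (intros ->; contradiction).
  destruct (join Hax) as [l1 [Hal1 Hxl1]].
  exists l0, l1. intros ->. contradiction.
Qed.

End Generation.

Lemma bijective_map_intro {X Y : Type} (f : X -> Y) :
  (forall x y, f x = f y -> x = y) -> (forall y, exists x, f x = y) -> bijective_map f.
Proof.
  intros Hinj Hsurj. destruct (choice _ Hsurj) as [g Hg].
  exists g. split; [intro x; apply Hinj; rewrite Hg|]; auto.
Qed.

Section PluckerIsomorphism.
Context {A A' : affine_space} {phi : line A -> line A'}.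
Hypothesis dim3 : @dim_ge3 A'.
Hypothesis iso : plucker_iso phi.

Lemma phi_injective a b : phi a = phi b -> a = b.
Proof.
  destruct iso as [[g [Hgphi _]] _]. intro E.
  now rewrite <- (Hgphi a), <- (Hgphi b), E.
Qed.

Lemma phi_surjective a' : exists a, phi a = a'.
Proof. destruct iso as [[g [_ Hphig]] _]. eauto. Qed.

Lemma phi_related a b : related a b -> related (phi a) (phi b).
Proof. apply (proj2 iso). Qed.

Lemma phi_related_back a b : related (phi a) (phi b) -> related a b.
Proof. apply (proj2 iso). Qed.

Lemma source_two_lines : exists l1 l2 : line A, l1 <> l2.
Proof.
  destruct (dim_ge3_two_lines dim3) as [l1' [l2' N12]].
  destruct (phi_surjective l1') as [l1 <-]. destruct (phi_surjective l2') as [l2 <-].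
  exists l1, l2. intros ->. auto.
Qed.

(* Images of three concurrent lines are concurrent: otherwise they would form
   a triangle generating A', since every line d' of A' meets the image of a
   line through the common point meeting the preimage of d'. *)
Lemma pencil_images_concurrent (a b c : line A) p :
  on p a -> on p b -> on p c ->
  exists s, on s (phi a) /\ on s (phi b) /\ on s (phi c).
Proof.
  intros Pa Pb Pc. apply NNPP. intro Hn.
  assert (Hp : forall e, on p e -> forall f, on p f -> related (phi e) (phi f)).
  { intros e Pe f Pf. apply phi_related. exists p; auto. }
  destruct (triangle_generates (phi a) (phi b) (phi c)) as [x [y [z [Hxyz Hgen]]]];
    auto.
  - intro d'. destruct (phi_surjective d') as [d <-].
    destruct (line_through_meeting p d) as [e [Pe Hed]].
    exists (phi e). repeat split; auto using phi_related.
  - exact (no_generating_triangle x y z dim3 Hxyz Hgen).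
Qed.

Lemma pencil_image_point (a b c : line A) p p' :
  a <> b -> on p a -> on p b -> on p c ->
  on p' (phi a) -> on p' (phi b) -> on p' (phi c).
Proof.
  intros Nab Pa Pb Pc P'a P'b.
  destruct (pencil_images_concurrent a b c p Pa Pb Pc) as [s [Sa [Sb Sc]]].
  assert (Nab' : phi a <> phi b) by (intro E; exact (Nab (phi_injective a b E))).
  now rewrite <- (meet_unique (phi a) (phi b) s p' Nab' Sa Sb P'a P'b).
Qed.

Lemma image_point_exists p : exists p', forall a, on p a -> on p' (phi a).
Proof.
  destruct source_two_lines as [l1 [l2 N12]].
  destruct (adjacent_lines_through l1 l2 N12 p) as [a [b [[_ Nab] [Pa Pb]]]].
  destruct (phi_related a b (ex_intro _ p (conj Pa Pb))) as [p' [P'a P'b]].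
  exists p'. intros c Pc. exact (pencil_image_point a b c p p' Nab Pa Pb Pc P'a P'b).
Qed.

Definition kappa (p : point A) : point A' :=
  proj1_sig (constructive_indefinite_description _ (image_point_exists p)).

Lemma kappa_on p a : on p a -> on (kappa p) (phi a).
Proof. exact (proj2_sig (constructive_indefinite_description _ (image_point_exists p)) a). Qed.

Lemma adjacent_images_meet_once a b :
  adjacent a b -> exists p', on p' (phi a) /\ on p' (phi b) /\
    forall q', on q' (phi a) -> on q' (phi b) -> q' = p'.
Proof.
  intros [Hr Nab]. destruct (phi_related a b Hr) as [p' [P'a P'b]].
  assert (Nab' : phi a <> phi b) by (intro E; exact (Nab (phi_injective a b E))).
  exists p'. repeat split; auto.
  intros q' Q'a Q'b. exact (meet_unique _ _ q' p' Nab' Q'a Q'b P'a P'b).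
Qed.

Lemma adjacent_images_meet_at_kappa a b p p' :
  adjacent a b -> on p a -> on p b -> on p' (phi a) -> on p' (phi b) -> p' = kappa p.
Proof.
  intros [_ Nab] Pa Pb P'a P'b.
  assert (Nab' : phi a <> phi b) by (intro E; exact (Nab (phi_injective a b E))).
  exact (meet_unique _ _ p' (kappa p) Nab' P'a P'b (kappa_on p a Pa) (kappa_on p b Pb)).
Qed.

(* kappa is injective: for x <> y, a line m through x other than xy and its
   parallel n through y would have images meeting in kappa x = kappa y. *)
Lemma kappa_injective x y : kappa x = kappa y -> x = y.
Proof.
  intro E. apply NNPP. intro Nxy.
  destruct (join Nxy) as [l [Lx Ly]].
  destruct source_two_lines as [l1 [l2 N12]].
  destruct (adjacent_lines_through l1 l2 N12 x) as [a [b [[_ Nab] [Pa Pb]]]].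
  assert (Hm : exists m, on x m /\ m <> l).
  { destruct (classic (a = l)) as [->|Nal]; eauto. }
  destruct Hm as [m [Xm Nml]].
  destruct (euclid A y m) as [n [Hnm [Yn _]]].
  assert (Hmn : related m n).
  { apply phi_related_back. exists (kappa x).
    split; [|rewrite E]; apply kappa_on; auto. }
  destruct Hmn as [s [Sm Sn]].
  rewrite (parallel_meeting_eq s Hnm Sn Sm) in Yn.
  exact (Nml (line_unique x y m l Nxy Xm Yn Lx Ly)).
Qed.

(* kappa is surjective: q' is kappa of the meeting point of the preimages of
   two adjacent lines through q'. *)
Lemma kappa_surjective q' : exists p, kappa p = q'.
Proof.
  destruct (dim_ge3_two_lines dim3) as [l1' [l2' N12]].
  destruct (adjacent_lines_through l1' l2' N12 q') as [a' [b' [[_ Nab] [Qa Qb]]]].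
  destruct (phi_surjective a') as [a <-]. destruct (phi_surjective b') as [b <-].
  destruct (phi_related_back a b (ex_intro _ q' (conj Qa Qb))) as [p [Pa Pb]].
  exists p. exact (meet_unique _ _ _ _ Nab (kappa_on p a Pa) (kappa_on p b Pb) Qa Qb).
Qed.

Lemma kappa_noncollinear x y z :
  ~ collinear x y z -> ~ collinear (kappa x) (kappa y) (kappa z).
Proof.
  intros Hn [l' [L1 [L2 L3]]].
  destruct source_two_lines as [l0 _].
  destruct (noncollinear_distinct l0 x y z Hn) as [Nxy [Nxz _]].
  destruct (join Nxy) as [l1 [X1 Y1]]. destruct (join Nxz) as [l2 [X2 Z2]].
  assert (E1 : phi l1 = l').
  { apply (line_unique (kappa x) (kappa y)); auto using kappa_on.
    intro E. exact (Nxy (kappa_injective x y E)). }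
  assert (E2 : phi l2 = l').
  { apply (line_unique (kappa x) (kappa z)); auto using kappa_on.
    intro E. exact (Nxz (kappa_injective x z E)). }
  rewrite (phi_injective l1 l2 (eq_trans E1 (eq_sym E2))) in Y1.
  apply Hn. exists l2; auto.
Qed.

Lemma kappa_collineation : collineation kappa.
Proof.
  split; [exact (bijective_map_intro kappa kappa_injective kappa_surjective)|].
  intros x y z. split; [|exact (kappa_noncollinear x y z)].
  intros [l [Lx [Ly Lz]]]. exists (phi l). auto using kappa_on.
Qed.

End PluckerIsomorphism.

Theorem theorem1 (A A' : affine_space) (phi : line A -> line A') :
  @dim_ge3 A' -> plucker_iso phi ->
  (* for adjacent a, b the images meet in exactly one point *)
  (forall a b : line A, adjacent a b ->
     exists p' : point A', on p' (phi a) /\ on p' (phi b) /\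
       forall q', on q' (phi a) -> on q' (phi b) -> q' = p') /\
  (* every point of A is the intersection of two adjacent lines *)
  (forall p : point A, exists a b, adjacent a b /\ on p a /\ on p b) /\
  (* the image point depends only on a /\ b *)
  (forall (a b c d : line A) (p : point A) (p' q' : point A'),
     adjacent a b -> adjacent c d ->
     on p a -> on p b -> on p c -> on p d ->
     on p' (phi a) -> on p' (phi b) -> on q' (phi c) -> on q' (phi d) ->
     p' = q') /\
  (* the induced map kappa is a collineation *)
  (exists kappa : point A -> point A',
     (forall (a b : line A) (p : point A), adjacent a b -> on p a -> on p b ->
        on (kappa p) (phi a) /\ on (kappa p) (phi b)) /\
     collineation kappa).
Proof.
  intros dim3 iso.
  split; [exact (adjacent_images_meet_once iso)|].
  split.
  { destruct (source_two_lines dim3 iso) as [l1 [l2 N12]].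
    exact (adjacent_lines_through l1 l2 N12). }
  split.
  { intros a b c d p p' q' Hab Hcd Pa Pb Pc Pd P'a P'b Q'c Q'd.
    rewrite (adjacent_images_meet_at_kappa dim3 iso a b p p' Hab Pa Pb P'a P'b).
    now rewrite (adjacent_images_meet_at_kappa dim3 iso c d p q' Hcd Pc Pd Q'c Q'd). }
  exists (kappa dim3 iso). split; [|exact (kappa_collineation dim3 iso)].
  intros a b p _ Pa Pb. split; apply kappa_on; assumption.
Qed.
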